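(* Let $A$ be a real $n\times n$ matrix acting on $H=\mathbb{R}^n$ (Euclidean inner product $\langle\cdot,\cdot\rangle$, norm $\|\cdot\|$) and let $\lambda$ be a real eigenvalue of $A$. Let $I\subset\mathbb{R}$ be an interval containing $0$ and let $\alpha,\beta:I\to\mathbb{R}$ be continuous, differentiable at $0$, and $u:I\to H$ continuous at $0$ with $\|u(t)\|=1$, such that for every $t\in I$, $$Au(t)=\alpha(t)u(t)^+-\beta(t)u(t)^-,$$ $\alpha(t)\neq\beta(t)$ for $t\neq 0$, $(\alpha(0),\beta(0))=(\lambda,\lambda)$ and $u(0)=u_0$. Then necessarily $u_0\in\operatorname{Ker}(A-\lambda I)$, $u_0\neq 0$, and $$\alpha'(0)\,\langle u_0^+,v\rangle=\beta'(0)\,\langle u_0^-,v\rangle\quad\text{for all } v\in\operatorname{Ker}(A^*-\lambda I).$$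
   Context: $A^*$ is the transpose of $A$. For $u\in\mathbb{R}^n$, $u^+$ and $u^-$ are defined componentwise by $u_i^+=\max\{u_i,0\}$, $u_i^-=\max\{-u_i,0\}$, so $u=u^+-u^-$. A pair $(\alpha,\beta)$ for which $Au=\alpha u^+-\beta u^-$ has a nontrivial solution belongs to the Fučík spectrum of $A$; $(\alpha(t),\beta(t))$ is a (continuous) Fučík curve with Fučík eigenvectors $u(t)$. *)

From HB Require Import structures.
From mathcomp Require Import all_boot all_order all_algebra.
From mathcomp Require Import all_classical all_reals all_analysis.
Set Implicit Arguments. Unset Strict Implicit. Unset Printing Implicit Defensive.
Import Order.TTheory GRing.Theory Num.Theory.
Import numFieldNormedType.Exports.
Local Open Scope classical_set_scope.
Local Open Scope ring_scope.

Definition pos_part (R : realType) (n : nat) (u : 'cV[R]_n) : 'cV[R]_n :=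
  map_mx (fun x => Num.max x 0) u.
Definition neg_part (R : realType) (n : nat) (u : 'cV[R]_n) : 'cV[R]_n :=
  map_mx (fun x => Num.max (- x) 0) u.

Definition dotv (R : realType) (n : nat) (u v : 'cV[R]_n) : R :=
  \sum_(i < n) u i 0 * v i 0.
Definition enorm (R : realType) (n : nat) (u : 'cV[R]_n) : R :=
  Num.sqrt (dotv u u).

(* f : I -> R has derivative df at x (relative to the set I, i.e. one-sided
   if x is an endpoint of I): the difference quotient tends to df as t -> x,
   t in I, t <> x. *)
Definition has_derivative_within (R : realType) (I : set R) (f : R -> R)
    (x df : R) : Prop :=
  (fun t => (f t - f x) / (t - x)) @ within (fun t => I t /\ t != x) (nbhs x)
    --> df.

Definition real_eigenvalue (R : realType) (n : nat) (A : 'M[R]_n) (l : R) : Prop :=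
  exists v : 'cV[R]_n, v != 0 /\ A *m v = l *: v.

From HB Require Import structures.
From mathcomp Require Import all_boot all_order all_algebra.
From mathcomp Require Import all_classical all_reals all_analysis.
From mathcomp Require Import lra.
Set Implicit Arguments. Unset Strict Implicit. Unset Printing Implicit Defensive.
Import Order.TTheory GRing.Theory Num.Theory.
Import numFieldNormedType.Exports.
Local Open Scope classical_set_scope.
Local Open Scope ring_scope.

(* Pairing the Fucik equation A u(t) = alpha(t) u(t)^+ - beta(t) u(t)^- with a
   vector v such that A^T v = lambda v, and using u = u^+ - u^-, gives
   (alpha(t) - lambda) <u(t)^+, v> = (beta(t) - lambda) <u(t)^-, v> for all t.
   Dividing by t and letting t -> 0 in I \ {0}, the difference quotients tend
   to alpha'(0) and beta'(0), while the inner products tend to <u0^+, v> and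
   <u0^-, v> because positive and negative parts are continuous. At t = 0 the
   equation reads A u0 = lambda u0, and ||u0|| = 1 forces u0 <> 0. *)

Section EuclideanParts.
Variables (R : realType) (n : nat).
Implicit Types (u v w : 'cV[R]_n).

Lemma dotvE u v : dotv u v = (u^T *m v) 0 0.
Proof. by rewrite /dotv mxE; apply: eq_bigr => i _; rewrite mxE. Qed.

Lemma dotvBl u w v : dotv (u - w) v = dotv u v - dotv w v.
Proof. by rewrite !dotvE linearB mulmxBl !mxE. Qed.

Lemma dotvZl a u v : dotv (a *: u) v = a * dotv u v.
Proof. by rewrite !dotvE linearZ -scalemxAl mxE. Qed.

Lemma dotvZr a u v : dotv u (a *: v) = a * dotv u v.
Proof. by rewrite !dotvE -scalemxAr mxE. Qed.

Lemma dotv_mulmx (A : 'M[R]_n) w v : dotv (A *m w) v = dotv w (A^T *m v).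
Proof. by rewrite !dotvE trmx_mul mulmxA. Qed.

Lemma enorm0 : enorm (0 : 'cV[R]_n) = 0.
Proof. by rewrite /enorm /dotv big1 ?sqrtr0 // => i _; rewrite mxE mul0r. Qed.

Lemma maxr0_sub_maxNr0 (x : R) : Num.max x 0 - Num.max (- x) 0 = x.
Proof.
have [x_ge0|x_lt0] := leP 0 x; first by rewrite max_r ?subr0 // oppr_le0.
by rewrite max_l ?sub0r ?opprK // oppr_ge0 ltW.
Qed.

Lemma pos_partB_neg_part w : pos_part w - neg_part w = w.
Proof. by apply/matrixP => i j; rewrite !mxE maxr0_sub_maxNr0. Qed.

Lemma cvg_dotv_map_mx (T : Type) (F : set_system T) {FF : Filter F}
    (g : R -> R) (u : T -> 'cV[R]_n) u0 v :
  continuous g -> u @ F --> u0 ->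
  dotv (map_mx g (u t)) v @[t --> F] --> dotv (map_mx g u0) v.
Proof.
move=> gC uu0; rewrite /dotv.
under eq_cvg => t do under eq_bigr => i _ do rewrite mxE.
under eq_bigr => i _ do rewrite mxE.
apply: (@cvg_big R _ +%R 0 xpredT add_continuous T F) => i _.
have giC : {for u0, continuous (fun M : 'cV[R]_n => g (M i 0))}.
  exact: (continuous_comp (@coord_continuous R n 1 i 0 u0) (gC _)).
exact: cvgMr_tmp (continuous_cvg _ giC uu0).
Qed.

Lemma continuous_max0 (f : R -> R) :
  continuous f -> continuous (fun x => Num.max (f x) 0).
Proof.
by move=> fC; apply: (@max_fun_continuous _ R R f (cst 0) fC (fun=> cvg_cst 0)).
Qed.

Lemma cvg_dotv_pos_part (T : Type) (F : set_system T) {FF : Filter F}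
    (u : T -> 'cV[R]_n) u0 v :
  u @ F --> u0 -> dotv (pos_part (u t)) v @[t --> F] --> dotv (pos_part u0) v.
Proof. exact: cvg_dotv_map_mx v (continuous_max0 (fun=> cvg_id)). Qed.

Lemma cvg_dotv_neg_part (T : Type) (F : set_system T) {FF : Filter F}
    (u : T -> 'cV[R]_n) u0 v :
  u @ F --> u0 -> dotv (neg_part (u t)) v @[t --> F] --> dotv (neg_part u0) v.
Proof. exact: cvg_dotv_map_mx v (continuous_max0 oppr_continuous). Qed.

Lemma dotv_fucik_eigen (A : 'M[R]_n) (l a b : R) w v :
  A *m w = a *: pos_part w - b *: neg_part w -> A^T *m v = l *: v ->
  (a - l) * dotv (pos_part w) v = (b - l) * dotv (neg_part w) v.
Proof.
move=> Aw ATv; have := dotv_mulmx A w v.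
rewrite Aw ATv dotvBl !dotvZl dotvZr -[in RHS](pos_partB_neg_part w) dotvBl.
by rewrite !mulrBl mulrBr; lra.
Qed.

End EuclideanParts.

Lemma eq_lim_mul (R : realFieldType) (T : Type) (F : set_system T)
    {FF : ProperFilter F} (f g p q : T -> R) (a b p0 q0 : R) :
  f @ F --> a -> g @ F --> b -> p @ F --> p0 -> q @ F --> q0 ->
  (\forall t \near F, f t * p t = g t * q t) -> a * p0 = b * q0.
Proof.
move=> fa gb pp0 qq0 fp_gq.
apply: (cvg_unique (@Rhausdorff R) (cvgM fa pp0)).
apply: cvg_trans (cvgM gb qq0); apply: near_eq_cvg.
by apply: filterS fp_gq => t /= ->.
Qed.

Lemma within_punctured_interval_proper (R : realFieldType) (I : set R) (x t : R) :
  is_interval I -> I x -> I t -> t != x ->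
  ProperFilter (within (fun s => I s /\ s != x) (nbhs x)).
Proof.
move=> iI Ix It tx; apply: within_nbhs_proper => B xB.
have seg_cvg : x + c * (t - x) @[c --> 0^'+] --> x.
  rewrite -[X in _ --> X]addr0 -[X in _ --> _ + X](mul0r (t - x)).
  by apply: cvgD; [exact: cvg_cst | apply: cvgMr_tmp; exact: cvg_at_right_filter].
have [c [Bc /andP[c_gt0 c_lt1]]] : exists c, B (x + c * (t - x)) /\ (0 < c < 1).
  apply/(@filter_ex _ (0^'+)).
  near=> c; split; first by near: c; exact: seg_cvg.
  by apply/andP; split; near: c; [exact: nbhs_right_gt | exact: nbhs_right_lt].
exists (x + c * (t - x)); split => //; split.
  by case: (leP x t) => ?; [apply: (iI x t) | apply: (iI t x)] => //;
    apply/andP; split; nra.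
by rewrite -subr_eq0 addrAC subrr add0r mulf_neq0 ?subr_eq0 // gt_eqF.
Unshelve. all: by end_near.
Qed.

Theorem theorem2 (R : realType) (n : nat) (A : 'M[R]_n) (lambda : R)
    (I : set R) (alpha beta : R -> R) (u : R -> 'cV[R]_n) (u0 : 'cV[R]_n)
    (da db : R) :
  real_eigenvalue A lambda ->
  is_interval I -> I 0 -> (exists t, I t /\ t != 0) ->
  {within I, continuous alpha} -> {within I, continuous beta} ->
  has_derivative_within I alpha 0 da ->
  has_derivative_within I beta 0 db ->
  u t @[t --> within I (nbhs 0)] --> u 0 ->
  (forall t, I t -> enorm (u t) = 1) ->
  (forall t, I t -> A *m u t = alpha t *: pos_part (u t) - beta t *: neg_part (u t)) ->
  (forall t, I t -> t != 0 -> alpha t != beta t) ->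
  alpha 0 = lambda -> beta 0 = lambda -> u 0 = u0 ->
  [/\ A *m u0 = lambda *: u0, u0 != 0 &
      forall v : 'cV[R]_n, A^T *m v = lambda *: v ->
        da * dotv (pos_part u0) v = db * dotv (neg_part u0) v].
Proof.
move=> _ iI I0 [t1 [It1 t1_neq0]] _ _ dalpha dbeta u_cvg u_unit u_fucik _
  alpha0 beta0 u0E.
split.
- by rewrite -u0E u_fucik // alpha0 beta0 -scalerBr pos_partB_neg_part.
- apply/eqP => u0_eq0; have := u_unit 0 I0.
  by rewrite u0E u0_eq0 enorm0 => /eqP; rewrite eq_sym oner_eq0.
move=> v ATv.
have punctured_proper := within_punctured_interval_proper iI I0 It1 t1_neq0.
have uF : u t @[t --> within (fun t => I t /\ t != 0) (nbhs 0)] --> u0.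
  rewrite -u0E; apply: cvg_trans u_cvg.
  by apply: cvg_app; apply: within_subset => t [].
apply: (eq_lim_mul dalpha dbeta).
- exact: cvg_dotv_pos_part uF.
- exact: cvg_dotv_neg_part uF.
near=> t; have [It _] : I t /\ t != 0 by near: t; exact: withinT.
rewrite /= [LHS]mulrAC [RHS]mulrAC alpha0 beta0.
by rewrite (dotv_fucik_eigen (u_fucik t It) ATv).
Unshelve. all: by end_near.
Qed.
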